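(* Let $(X,\|\cdot\|)$ be a Banach space and $(M,d)$ a metric space. Assume there exist increasing functions $\rho,\omega:[0,\infty)\to[0,\infty)$ tending to $\infty$ at $\infty$, a point $m_0\in M$, and for every $n\in\mathbb{N}$ a map $h_n:nB_X\to M$ with $h_n(0)=m_0$ and $\rho(\|x-y\|)\le d(h_n(x),h_n(y))\le\omega(\|x-y\|)$ for all $x,y\in nB_X$. Equip $M^4$ with the metric $d((a_i),(b_i))=\max_{1\le i\le4}d(a_i,b_i)$. Then there is a map $F:X\to M^4$ such that $\tilde\rho(\|x-y\|)\le d(F(x),F(y))\le\tilde\omega(\|x-y\|)$ for all $x,y\in X$, where $\tilde\rho(t)=\frac12\rho(t/2)$ and $\tilde\omega(t)=8\omega(3t)$.
   Context: $B_X$ denotes the closed unit ball of $X$, and $nB_X=\{x\in X:\|x\|\le n\}$. *)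

From HB Require Import structures.
From mathcomp Require Import all_boot all_order all_algebra.
From mathcomp Require Import all_classical all_reals all_analysis.
Set Implicit Arguments. Unset Strict Implicit. Unset Printing Implicit Defensive.
Import Order.TTheory GRing.Theory Num.Theory.
Import numFieldNormedType.Exports.
Local Open Scope classical_set_scope.
Local Open Scope ring_scope.

Definition is_metric (R : realType) (M : Type) (d : M -> M -> R) : Prop :=
  [/\ forall x y, 0 <= d x y,
      forall x y, d x y = 0 <-> x = y,
      forall x y, d x y = d y x &
      forall x y z, d x z <= d x y + d y z].

Definition incr_to_infty (R : realType) (f : R -> R) : Prop :=
  [/\ forall t, 0 <= t -> 0 <= f t,
      forall s t, 0 <= s -> s <= t -> f s <= f t &
      (f x @[x --> +oo%R] --> +oo%R)].

Definition d4 (R : realType) (M : Type) (d : M -> M -> R) (a b : 'I_4 -> M) : R :=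
  \big[Num.max/0]_(i < 4) d (a i) (b i).

From HB Require Import structures.
From mathcomp Require Import all_boot all_order all_algebra.
From mathcomp Require Import all_classical all_reals all_analysis.
From mathcomp Require Import zify ring lra.
Import Order.TTheory GRing.Theory Num.Theory.
Import numFieldNormedType.Exports.
Set Implicit Arguments. Unset Strict Implicit.
Local Open Scope ring_scope.

(* Choose a fast sequence 0 = T_0 < T_1 < ... with 2 T_k < T_(k+1) and
   2 omega(T_k) <= rho(T_(k+1)).  For each i < 4 the breakpoints
   0, T_(i+1), T_(i+5), T_(i+9), ... cut X into annuli; on the annulus
   b_j <= |x| < b_(j+1) the i-th coordinate of F is h_(b_(j+1)) applied to a
   radial contraction of x which is the identity in the middle of the annulus
   and shrinks x to 0 near both of its boundary spheres.  Crossing an annulus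
   boundary is paid for through the base point m0 = h_n(0), which gives the
   upper bound 2 omega(3 |x - y|) in every coordinate.  For the lower bound, if
   |x| <= |y| and T_k <= |y| < T_(k+1), the annuli of the family i = k+1 mod 4
   contain [T_(k-1), T_(k+1)) in the middle of one annulus: either x lies there
   too and that coordinate is h_n on both points, or |x| < T_(k-1) and the
   choice of T makes rho(|y|) - omega(|x|) >= rho(|y|)/2. *)

Section Cutoff.
Variable R : realFieldType.
Implicit Types a b L U r s : R.

Definition rise L r : R := if L == 0 then 1 else Num.min 1 ((r - L) / L).
Definition fall U r : R := 2 * (U - r) / U.
Definition cutoff L U r : R := Num.min (rise L r) (fall U r).

Lemma dist_min a b (a' b' : R) :
  `|Num.min a b - Num.min a' b'| <= Num.max `|a - a'| `|b - b'|.
Proof.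
set m := Num.max _ _.
have [ha hb] : `|a - a'| <= m /\ `|b - b'| <= m by rewrite !le_max !lexx orbT.
move: ha hb; rewrite !ler_norml => /andP [? ?] /andP [? ?].
by rewrite !minEle; case: ifP => ?; case: ifP => ?; apply/andP; split; lra.
Qed.

Lemma rise_ge0 L r : 0 <= L -> L <= r -> 0 <= rise L r.
Proof.
move=> L0 Lr; rewrite /rise; case: eqP => // _.
by rewrite le_min ler01 divr_ge0 // subr_ge0.
Qed.

Lemma rise_le1 L r : rise L r <= 1.
Proof. by rewrite /rise; case: eqP => // _; rewrite ge_min lexx. Qed.

Lemma rise_plateau L r : 0 <= L -> 2 * L <= r -> rise L r = 1.
Proof.
move=> L0 Lr; rewrite /rise; case: eqP => // /eqP Lneq0.
have Lpos : 0 < L by rewrite lt_def Lneq0.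
by apply/min_idPl; rewrite ler_pdivlMr // mul1r; lra.
Qed.

Lemma rise_mul L r : 0 < L -> L <= r -> rise L r * r <= 2 * (r - L).
Proof.
move=> Lpos Lr; have r0 : 0 <= r by lra.
have [rL|Lr2] := lerP r (2 * L); last first.
  by apply: le_trans (ler_wpM2r r0 (rise_le1 L r)) _; lra.
have min_le : Num.min 1 ((r - L) / L) <= (r - L) / L by rewrite ge_min lexx orbT.
rewrite /rise gt_eqF //; apply: le_trans (ler_wpM2r r0 min_le) _.
rewrite mulrAC ler_pdivrMr //; nra.
Qed.

(* Lipschitz estimate weighted by the radius r: the slope 1/L only matters
   below 2L, where r <= 2L. *)
Lemma rise_lip L r s : 0 <= L -> L <= r -> r <= s ->
  `|rise L r - rise L s| * r <= 2 * (s - r).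
Proof.
move=> L0 Lr rs; have r0 : 0 <= r by lra.
have [Lr2|rL] := lerP (2 * L) r.
  by rewrite !rise_plateau ?subrr ?normr0 ?mul0r //; lra.
rewrite /rise; case: eqP => [_|/eqP Lneq0]; first by rewrite subrr normr0 mul0r; lra.
have Lpos : 0 < L by rewrite lt_def Lneq0.
apply: le_trans (ler_wpM2r r0 (dist_min _ _ _ _)) _.
have -> : (r - L) / L - (s - L) / L = - ((s - r) / L) by field; rewrite gt_eqF.
rewrite subrr normr0 normrN ger0_norm ?divr_ge0 ?subr_ge0 //.
rewrite max_r ?divr_ge0 ?subr_ge0 // mulrAC ler_pdivrMr //; nra.
Qed.

Lemma fallE U r : 0 < U -> fall U r * U = 2 * (U - r).
Proof. by move=> U0; rewrite /fall divfK ?gt_eqF. Qed.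

Lemma fall_ge0 U r : 0 < U -> r <= U -> 0 <= fall U r.
Proof. by move=> U0 rU; rewrite /fall divr_ge0 ?mulr_ge0 ?subr_ge0 // ltW. Qed.

Lemma fall_ge1 U r : 0 < U -> 2 * r <= U -> 1 <= fall U r.
Proof. by move=> U0 rU; rewrite /fall ler_pdivlMr // mul1r; lra. Qed.

Lemma fall_mul U r : 0 < U -> 0 <= r -> r <= U -> fall U r * r <= 2 * (U - r).
Proof.
move=> U0 r0 rU; rewrite -fallE //.
by apply: ler_wpM2l => //; apply: fall_ge0.
Qed.

Lemma fall_lip U r s : 0 < U -> 0 <= r -> r <= s -> r <= U ->
  `|fall U r - fall U s| * r <= 2 * (s - r).
Proof.
move=> U0 r0 rs rU.
have -> : fall U r - fall U s = 2 * (s - r) / U by rewrite /fall; field; rewrite gt_eqF.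
rewrite ger0_norm ?divr_ge0 ?mulr_ge0 ?subr_ge0 ?(ltW U0) //.
by rewrite mulrAC ler_pdivrMr //; apply: ler_wpM2l => //; lra.
Qed.

Lemma cutoff_ge0 L U r : 0 <= L -> L <= r -> r <= U -> 0 < U -> 0 <= cutoff L U r.
Proof. by move=> *; rewrite le_min rise_ge0 ?fall_ge0. Qed.

Lemma cutoff_le1 L U r : cutoff L U r <= 1.
Proof. by rewrite ge_min rise_le1. Qed.

Lemma cutoff_plateau L U r : 0 <= L -> 2 * L <= r -> 2 * r <= U -> 0 < U ->
  cutoff L U r = 1.
Proof. by move=> *; rewrite /cutoff rise_plateau //; apply/min_idPl/fall_ge1. Qed.

Lemma cutoff_mul_fall L U r : 0 <= r -> r <= U -> 0 < U ->
  cutoff L U r * r <= 2 * (U - r).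
Proof.
move=> r0 rU U0; have c_le : cutoff L U r <= fall U r by rewrite ge_min lexx orbT.
exact: le_trans (ler_wpM2r r0 c_le) (fall_mul _ _ _).
Qed.

Lemma cutoff_mul_rise L U r : 0 < L -> L <= r -> cutoff L U r * r <= 2 * (r - L).
Proof.
move=> L0 Lr; have r0 : 0 <= r by lra.
have c_le : cutoff L U r <= rise L r by rewrite ge_min lexx.
exact: le_trans (ler_wpM2r r0 c_le) (rise_mul _ _).
Qed.

Lemma cutoff_lip L U r s : 0 <= L -> L <= r -> r <= s -> s <= U -> 0 < U ->
  `|cutoff L U r - cutoff L U s| * r <= 2 * (s - r).
Proof.
move=> L0 Lr rs sU U0; have r0 : 0 <= r by lra.
apply: le_trans (ler_wpM2r r0 (dist_min _ _ _ _)) _.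
by rewrite maxr_pMl // ge_max rise_lip ?fall_lip //; lra.
Qed.

End Cutoff.

Section Radial.
Variables (R : realFieldType) (X : normedModType R).
Implicit Types (L U : R) (x y : X).

Definition radial L U x : X := cutoff L U `|x| *: x.

Lemma radial_norm L U x : 0 <= L -> L <= `|x| -> `|x| <= U -> 0 < U ->
  `|radial L U x| = cutoff L U `|x| * `|x|.
Proof. by move=> *; rewrite normrZ ger0_norm // cutoff_ge0. Qed.

Lemma radial_norm_le L U x : 0 <= L -> L <= `|x| -> `|x| <= U -> 0 < U ->
  `|radial L U x| <= `|x|.
Proof. by move=> *; rewrite radial_norm // ler_piMl // cutoff_le1. Qed.

Lemma radial_norm_outer L U x : 0 <= L -> L <= `|x| -> `|x| <= U -> 0 < U ->
  `|radial L U x| <= 2 * (U - `|x|).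
Proof. by move=> *; rewrite radial_norm // cutoff_mul_fall. Qed.

Lemma radial_norm_inner L U x : 0 < L -> L <= `|x| -> `|x| <= U -> 0 < U ->
  `|radial L U x| <= 2 * (`|x| - L).
Proof. by move=> L0 *; rewrite radial_norm ?(ltW L0) // cutoff_mul_rise. Qed.

(* Write a x - b y = b (x - y) + (a - b) x and use the weighted Lipschitz
   estimate of the cutoff at the smaller radius |x|. *)
Lemma radial_lip L U x y : 0 <= L -> L <= `|x| -> `|x| <= `|y| -> `|y| <= U -> 0 < U ->
  `|radial L U x - radial L U y| <= 3 * `|x - y|.
Proof.
move=> L0 Lx xy yU U0.
set a := cutoff L U `|x|; set b := cutoff L U `|y|.
have -> : a *: x - b *: y = b *: (x - y) + (a - b) *: x.
  by rewrite scalerBr scalerBl [RHS]addrC [RHS]addrA subrK.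
have b0 : 0 <= b by apply: cutoff_ge0 => //; lra.
have b_small : b * `|x - y| <= `|x - y| by rewrite ler_piMl ?cutoff_le1.
have ab_small : `|a - b| * `|x| <= 2 * (`|y| - `|x|) by apply: cutoff_lip.
have norm_gap : `|y| - `|x| <= `|x - y| by rewrite distrC lerB_dist.
apply: le_trans (ler_normD _ _) _; rewrite !normrZ (ger0_norm b0); lra.
Qed.

End Radial.

Section LayerIndex.
Variable R : realFieldType.
Implicit Types (b : nat -> nat) (r s : R).

Definition layer_index b r : nat :=
  match pselect (exists j, r < (b j.+1)%:R) with
  | left ex => ex_minn ex | right _ => 0%N end.

Lemma layer_indexP b r : b 0%N = 0%N -> (exists j, r < (b j.+1)%:R) -> 0 <= r ->
  (b (layer_index b r))%:R <= r < (b (layer_index b r).+1)%:R.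
Proof.
move=> b0 ex r0; rewrite /layer_index; case: pselect => // {}ex.
case: ex_minnP => j rj j_min; rewrite rj andbT.
case: j rj j_min => [|j] rj j_min; first by rewrite b0.
by rewrite leNgt; apply/negP => /j_min; rewrite ltnn.
Qed.

Lemma layer_index_eq b r j : {homo b : m n / (m <= n)%N} ->
  (b j)%:R <= r -> r < (b j.+1)%:R -> layer_index b r = j.
Proof.
move=> b_mono bj_r r_bj; rewrite /layer_index; case: pselect => [ex|[]]; last by exists j.
case: ex_minnP => k rk k_min; apply/eqP; rewrite eqn_leq (k_min _ r_bj) /=.
rewrite leqNgt; apply/negP => jk.
have : (b k.+1 <= b j)%N by exact: b_mono.
by rewrite -(ler_nat R) => bk; lra.
Qed.

Lemma layer_index_mono b r s : (exists j, s < (b j.+1)%:R) -> r <= s ->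
  (layer_index b r <= layer_index b s)%N.
Proof.
move=> ex rs; rewrite /layer_index; case: pselect => // exr.
case: pselect => [exs|[]] //; case: (ex_minnP exr) => k _ k_min.
by case: ex_minnP => l sl _; apply: k_min; lra.
Qed.

End LayerIndex.

Lemma nat_seq_unbounded (R : archiRealFieldType) (b : nat -> nat) :
  (forall j, j <= b j.+1)%N -> forall r : R, exists j, r < (b j.+1)%:R.
Proof.
move=> b_ge r; exists (Num.truncn r).+1.
by apply: lt_le_trans (truncnS_gt r) _; rewrite ler_nat.
Qed.

Section Layers.
Variable T : nat -> nat.
Hypothesis T_grow : forall k, (2 * T k < T k.+1)%N.

Lemma T_mono : {homo T : m n / (m <= n)%N}.
Proof. by apply: homo_leq => [//|? ? ?|k]; [exact: leq_trans | have := T_grow k; lia]. Qed.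

Lemma T_ge_id k : (k <= T k)%N.
Proof. by elim: k => [//|k IH]; have := T_grow k; lia. Qed.

Definition breaks (i j : nat) : nat := if j is j'.+1 then T (4 * j' + i + 1) else 0.

Lemma breaks_mono i : {homo breaks i : m n / (m <= n)%N}.
Proof. by move=> [|m] [|n] //= mn; apply: T_mono; lia. Qed.

Lemma breaks_ge_id i j : (j <= breaks i j.+1)%N.
Proof. by apply: leq_trans (T_ge_id _); lia. Qed.

(* The key covering property: for i = k+1 mod 4 the interval
   [T (k-1), T (k+1)] lies in the middle [2 b j, b (j+1) / 2] of the annulus j
   of family i, where j = (k+1) / 4 and b (j+1) = T (k+2). *)
Lemma breaks_bracket k :
  (2 * breaks (k.+1 %% 4) (k.+1 %/ 4) <= T k.-1)%N /\
  (2 * T k.+1 < breaks (k.+1 %% 4) (k.+1 %/ 4).+1)%N.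
Proof.
have := divn_eq k.+1 4; move: (k.+1 %/ 4)%N (k.+1 %% 4)%N => j i E.
have breaks_next : breaks i j.+1 = T k.+2 by congr T; lia.
split; last by rewrite breaks_next T_grow.
case: j E {breaks_next} => [//|j] E.
have -> : k.-1 = (4 * j + i + 1).+1 by lia.
exact: ltnW (T_grow _).
Qed.


End Layers.

(* Since rho tends to +oo, a fast sequence with 2 omega (T k) <= rho (T (k+1))
   exists (by dependent choice, iterating a choice of the next term). *)
Lemma fast_sequence (R : realType) (rho omega : R -> R) :
  (rho x @[x --> +oo] --> +oo)%classic ->
  exists T : nat -> nat, T 0%N = 0%N /\
    forall k, (2 * T k < T k.+1)%N /\ 2 * omega (T k)%:R <= rho (T k.+1)%:R.
Proof.
move/cvgryPge => rho_oo.
have next m : exists n, (2 * m < n)%N /\ 2 * omega m%:R <= rho n%:R.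
  have [A [_ A_le]] := rho_oo (2 * omega m%:R).
  exists (maxn (2 * m).+1 (Num.truncn A).+1); split; first exact: leq_maxl.
  by apply: A_le; apply: lt_le_trans (truncnS_gt A) _; rewrite ler_nat leq_maxr.
have [g gP] := choice next.
by exists (fun k => iter k g 0%N); split=> // k; exact: gP.
Qed.

Section Glued.
Variables (R : archiRealFieldType) (X : normedModType R) (M : Type) (d : M -> M -> R).
Hypothesis d_sym : forall a b, d a b = d b a.
Hypothesis d_tri : forall a b c, d a c <= d a b + d b c.
Variables (rho omega : R -> R) (m0 : M) (h : nat -> X -> M).
Hypothesis omega_ge0 : forall t, 0 <= t -> 0 <= omega t.
Hypothesis omega_mono : forall s t, 0 <= s -> s <= t -> omega s <= omega t.
Hypothesis h0 : forall n, h n 0 = m0.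
Hypothesis h_upper : forall n (x y : X), `|x| <= n%:R -> `|y| <= n%:R ->
  d (h n x) (h n y) <= omega `|x - y|.

Lemma dist_base_upper n (z : X) : `|z| <= n%:R -> d m0 (h n z) <= omega `|z|.
Proof. by move=> zn; rewrite -(h0 n) -[`|z|]normrN -sub0r h_upper ?normr0. Qed.

Definition glued (b : nat -> nat) (x : X) : M :=
  let j := layer_index b `|x| in h (b j.+1) (radial (b j)%:R (b j.+1)%:R x).

Section OneScale.
Variable b : nat -> nat.
Hypothesis b0 : b 0%N = 0%N.
Hypothesis b_mono : {homo b : m n / (m <= n)%N}.
Hypothesis b_unbounded : forall r : R, exists j, r < (b j.+1)%:R.

Lemma glued_base (x : X) : d m0 (glued b x) <= omega `|x|.
Proof.
have /andP [lo hi] := layer_indexP b0 (b_unbounded `|x|) (normr_ge0 x).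
move: lo hi; rewrite /glued; set j := layer_index b `|x| => lo hi.
have U0 : 0 < (b j.+1)%:R :> R by apply: le_lt_trans hi.
have psi_le := radial_norm_le (ler0n _ _) lo (ltW hi) U0.
by apply: le_trans (dist_base_upper _) _; [lra | apply: omega_mono].
Qed.

Lemma glued_plateau j (x : X) : 2 * (b j)%:R <= `|x| -> 2 * `|x| < (b j.+1)%:R ->
  glued b x = h (b j.+1) x.
Proof.
move=> lo hi; have x0 := normr_ge0 x.
rewrite /glued (layer_index_eq (j := j) b_mono); [|lra|lra].
by rewrite /radial cutoff_plateau ?scale1r //; lra.
Qed.

(* Upper bound: inside one annulus use the 3-Lipschitz contraction; across
   annuli go through m0, both contracted points being within 2 |x - y| of 0. *)
Lemma glued_upper (x y : X) : d (glued b x) (glued b y) <= 2 * omega (3 * `|x - y|).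
Proof.
wlog xy : x y / `|x| <= `|y|.
  move=> wlog; have [|/ltW] := lerP `|x| `|y|; first exact: wlog.
  by rewrite d_sym distrC; exact: wlog.
have /andP [lox hix] := layer_indexP b0 (b_unbounded `|x|) (normr_ge0 x).
have /andP [loy hiy] := layer_indexP b0 (b_unbounded `|y|) (normr_ge0 y).
have jxy := layer_index_mono (b_unbounded `|y|) xy.
move: lox hix loy hiy jxy; rewrite /glued.
set jx := layer_index b `|x|; set jy := layer_index b `|y| => lox hix loy hiy jxy.
have gap : `|y| - `|x| <= `|x - y| by rewrite distrC lerB_dist.
have t0 := normr_ge0 (x - y); have x0 := normr_ge0 x.
have w0 : 0 <= omega (3 * `|x - y|) by apply: omega_ge0; lra.
have Ux0 : 0 < (b jx.+1)%:R :> R by lra.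
have Uy0 : 0 < (b jy.+1)%:R :> R by lra.
have psix_le := radial_norm_le (ler0n _ _) lox (ltW hix) Ux0.
have psiy_le := radial_norm_le (ler0n _ _) loy (ltW hiy) Uy0.
move: jxy; rewrite leq_eqVlt => /orP [/eqP same | apart].
  rewrite -same in loy hiy Uy0 psiy_le *.
  apply: le_trans (h_upper _ _) _; [lra | lra |].
  suff : omega `|radial (b jx)%:R (b jx.+1)%:R x - radial (b jx)%:R (b jx.+1)%:R y|
    <= omega (3 * `|x - y|) by lra.
  by apply/omega_mono/radial_lip => //; lra.
have UxLy : (b jx.+1)%:R <= (b jy)%:R :> R by rewrite ler_nat b_mono.
have psix_small := radial_norm_outer (ler0n _ _) lox (ltW hix) Ux0.
have Ly0 : 0 < (b jy)%:R :> R by lra.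
have psiy_small := radial_norm_inner Ly0 loy (ltW hiy) Uy0.
apply: le_trans (d_tri _ m0 _) _; rewrite d_sym.
have ex : d m0 (h (b jx.+1) (radial (b jx)%:R (b jx.+1)%:R x)) <= omega (3 * `|x - y|).
  by apply: le_trans (dist_base_upper _) (omega_mono _ _); rewrite ?normr_ge0 //; lra.
have ey : d m0 (h (b jy.+1) (radial (b jy)%:R (b jy.+1)%:R y)) <= omega (3 * `|x - y|).
  by apply: le_trans (dist_base_upper _) (omega_mono _ _); rewrite ?normr_ge0 //; lra.
lra.
Qed.
End OneScale.
Hypothesis rho_ge0 : forall t, 0 <= t -> 0 <= rho t.
Hypothesis rho_mono : forall s t, 0 <= s -> s <= t -> rho s <= rho t.
Hypothesis h_lower : forall n (x y : X), `|x| <= n%:R -> `|y| <= n%:R ->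
  rho `|x - y| <= d (h n x) (h n y).

Lemma dist_base_lower n (z : X) : `|z| <= n%:R -> rho `|z| <= d m0 (h n z).
Proof. by move=> zn; rewrite -(h0 n) -[`|z|]normrN -sub0r h_lower ?normr0. Qed.

Section FourLayers.
Variable T : nat -> nat.
Hypothesis T0 : T 0%N = 0%N.
Hypothesis T_grow : forall k, (2 * T k < T k.+1)%N.
Hypothesis T_sep : forall k, 2 * omega (T k)%:R <= rho (T k.+1)%:R.

Lemma breaks_plateau k (u : X) : (T k.-1)%:R <= `|u| -> `|u| < (T k.+1)%:R ->
  glued (breaks T (k.+1 %% 4)%N) u = h (breaks T (k.+1 %% 4)%N (k.+1 %/ 4)%N.+1) u.
Proof.
move=> lo hi; have [lo' hi'] := breaks_bracket T_grow k.
apply: (glued_plateau (breaks_mono T_grow _)).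
  by apply: le_trans lo; rewrite -natrM ler_nat.
apply: lt_le_trans (_ : 2 * (T k.+1)%:R <= _); first lra.
by rewrite -natrM ler_nat ltnW.
Qed.

(* Lower bound: with |x| <= |y|, either omega |x| <= rho |y| / 2 and the base
   point separates the images, or |x| >= T (k-1) and both points are mapped
   by the same h n. *)
Lemma four_layers_lower (x y : X) : exists i : 'I_4,
  (1 / 2) * rho (`|x - y| / 2) <= d (glued (breaks T i) x) (glued (breaks T i) y).
Proof.
wlog xy : x y / `|x| <= `|y|.
  move=> wlog; have [|/ltW yx] := lerP `|x| `|y|; first exact: wlog.
  by have [i Hi] := wlog y x yx; exists i; rewrite d_sym distrC.
have T_unbounded : forall r : R, exists j, r < (T j.+1)%:R.
  by apply: nat_seq_unbounded => j; apply: leq_trans (T_ge_id T_grow j.+1).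
have /andP [loy hiy] := layer_indexP T0 (T_unbounded `|y|) (normr_ge0 y).
set k := layer_index T `|y| in loy hiy.
exists (inord (k.+1 %% 4)%N); rewrite inordK ?ltn_pmod //.
set n := breaks T (k.+1 %% 4)%N (k.+1 %/ 4)%N.+1.
have n_big : (T k.+1)%:R <= n%:R :> R.
  by rewrite ler_nat; have := (breaks_bracket T_grow k).2; lia.
have Tk_pred : (T k.-1)%:R <= (T k)%:R :> R by rewrite ler_nat T_mono // leq_pred.
rewrite (breaks_plateau (le_trans Tk_pred loy) hiy).
have x0 := normr_ge0 x; have t0 := normr_ge0 (x - y).
have t_le : `|x - y| <= `|x| + `|y| by apply: ler_normB.
have rho_t2 : rho (`|x - y| / 2) <= rho `|y| by apply: rho_mono; lra.
have rho_t20 : 0 <= rho (`|x - y| / 2) by apply: rho_ge0; lra.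
have [far|near] := lerP (omega `|x|) (rho `|y| / 2).
  have gx := glued_base erefl (nat_seq_unbounded (breaks_ge_id T_grow (k.+1 %% 4)%N)) x.
  have gy : rho `|y| <= d m0 (h n y) by apply: dist_base_lower; lra.
  have := d_tri m0 (glued (breaks T (k.+1 %% 4)%N) x) (h n y); lra.
have lox : (T k.-1)%:R <= `|x|.
  have [k0|k_pos] := posnP k; first by rewrite k0 T0.
  rewrite leNgt; apply/negP => x_small.
  have := T_sep k.-1; rewrite prednK //.
  have := omega_mono x0 (ltW x_small); have := rho_mono (ler0n _ _) loy; lra.
rewrite (breaks_plateau lox (le_lt_trans xy hiy)).
have rho_t : rho (`|x - y| / 2) <= rho `|x - y| by apply: rho_mono; lra.
have := h_lower (n := n) (x := x) (y := y); lra.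
Qed.

End FourLayers.
End Glued.

Section MaxMetric.
Variables (R : realType) (M : Type) (d : M -> M -> R).

Lemma d4_ge (a b : 'I_4 -> M) i : d (a i) (b i) <= d4 d a b.
Proof. exact: (le_bigmax _ (fun i => d (a i) (b i))). Qed.

Lemma d4_le (a b : 'I_4 -> M) (B : R) :
  0 <= B -> (forall i, d (a i) (b i) <= B) -> d4 d a b <= B.
Proof. by move=> B0 ab_le; apply: bigmax_le. Qed.

End MaxMetric.

Theorem theorem4p4 (R : realType) (X : completeNormedModType R)
  (M : Type) (d : M -> M -> R) (rho omega : R -> R) (m0 : M)
  (h : nat -> X -> M) :
  is_metric d ->
  incr_to_infty rho -> incr_to_infty omega ->
  (forall n : nat, h n 0 = m0) ->
  (forall (n : nat) (x y : X), `|x| <= n%:R -> `|y| <= n%:R ->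
     rho `|x - y| <= d (h n x) (h n y) /\ d (h n x) (h n y) <= omega `|x - y|) ->
  exists F : X -> ('I_4 -> M), forall x y : X,
    (1 / 2) * rho (`|x - y| / 2) <= d4 d (F x) (F y) /\
    d4 d (F x) (F y) <= 8 * omega (3 * `|x - y|).
Proof.
move=> [_ _ d_sym d_tri] [rho_ge0 rho_mono rho_oo] [omega_ge0 omega_mono _] h0 h_bounds.
have h_lower n x y xn yn := (h_bounds n x y xn yn).1.
have h_upper n x y xn yn := (h_bounds n x y xn yn).2.
have [T [T0 T_props]] := fast_sequence omega rho_oo.
have T_grow k := (T_props k).1; have T_sep k := (T_props k).2.
exists (fun x (i : 'I_4) => glued h (breaks T i) x) => x y; split.
  have [i lower] := four_layers_lower d_sym d_tri omega_mono h0 h_upper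
    rho_ge0 rho_mono h_lower T0 T_grow T_sep x y.
  exact: le_trans lower (d4_ge _ _ _ i).
have w0 : 0 <= omega (3 * `|x - y|) by apply: omega_ge0; rewrite mulr_ge0.
apply: d4_le => [|i]; first lra.
have := glued_upper d_sym d_tri omega_ge0 omega_mono h0 h_upper (b := breaks T i)
  erefl (breaks_mono T_grow i) (nat_seq_unbounded (breaks_ge_id T_grow i)) x y.
lra.
Qed.
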